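(* Let $Q$ be a finite quiver of diameter $1$. As $\le$ ranges over all graphic orderings of $Q$, the simple labelings $\sigma_\le$ range over exactly the set of strict acyclic labelings of the simplification $Q^{\mathrm s}$.
   Context: Quivers: - $Q$ has diameter $1$ if no vertex is both the target of an arrow and the source of an arrow. - A sink is a vertex that is the target of some arrow; every other vertex (including isolated ones) is a source. - $d,c$ denote the source and target maps. Simplification: - An arrow $s\to t$ is isolated if it is the unique arrow from $s$ to $t$, and parallel otherwise. - A sink is isolating if it is the target of some isolated arrow. - $Q^{\mathrm s}$ is obtained from $Q$ by deleting all parallel arrows and all non-isolating sinks. Labelings: - A labeling is a map from the arrows to $\{+,-\}$. It is acyclic if reversing the arrows labelled $-$ yields an orientation of the underlying multigraph without directed cycles. - It is strict if every sink is the target of exactly one arrow labelled $+$. Graphic orderings: - A graphic ordering of $Q$ is a linear order $\le$ on the set of sources of $Q$. - It determines a labeling $\sigma_\le$ of $Q^{\mathrm s}$: for an arrow $x$ of $Q^{\mathrm s}$, $\sigma_\le(x)=+$ if and only if $d(x)$ is the $\le$-least element of $\{d(y)\mid y \text{ an arrow of } Q^{\mathrm s},\ c(y)=c(x)\}$. *)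

From mathcomp Require Import all_boot.
Set Implicit Arguments. Unset Strict Implicit. Unset Printing Implicit Defensive.

(* A finite quiver: finite vertex type V, finite arrow type A,
   source map d and target map c. Labels: true = '+', false = '-'. *)
Section Quiver.
Variables (V A : finType) (d c : A -> V).

Definition diameter1 : Prop := forall a b : A, c a <> d b.

Definition is_sink (v : V) : bool := [exists a : A, c a == v].
Definition is_source (v : V) : bool := ~~ is_sink v.

Definition isolated (a : A) : bool :=
  [forall b : A, ((d b == d a) && (c b == c a)) ==> (b == a)].

(* arrows of the simplification Q^s = the isolated arrows of Q
   (vertices of Q^s: sources of Q and isolating sinks = targets of
   isolated arrows; they play no further role in labelings). *)
Definition sarrow := {a : A | isolated a}.

Definition slabeling := {ffun sarrow -> bool}.

Definition orient (s : slabeling) : rel V :=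
  fun u v => [exists x : sarrow,
    if s x then (d (val x) == u) && (c (val x) == v)
           else (c (val x) == u) && (d (val x) == v)].

Definition acyclic_lab (s : slabeling) : Prop :=
  forall u v : V, orient s u v -> ~~ connect (orient s) v u.

Definition strict_lab (s : slabeling) : Prop :=
  forall v : V, [exists x : sarrow, c (val x) == v] ->
    #|[set x : sarrow | (c (val x) == v) && s x]| = 1.

(* graphic ordering: a linear order on the set of sources of Q
   (given as a relation on V whose restriction to sources is a linear order;
   its values outside the sources are irrelevant). *)
Definition graphic_ordering (le : rel V) : Prop :=
  [/\ {in is_source, reflexive le},
      {in is_source &, antisymmetric le},
      {in is_source & &, transitive le} &
      {in is_source &, total le}].

Definition sigma_of (le : rel V) : slabeling :=
  [ffun x : sarrow => [forall y : sarrow, (c (val y) == c (val x)) ==> le (d (val x)) (d (val y))]].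

End Quiver.

From mathcomp Require Import all_boot.

Set Implicit Arguments. Unset Strict Implicit. Unset Printing Implicit Defensive.

(* With diameter 1, every arrow of the orientation of a labeling runs from a
   source to a sink (label +) or from a sink to a source (label -).  Under
   sigma_le, everything reachable from a source u sits above u: reachable
   sources are >= u, and so are the sources of all arrows into reachable
   sinks.  A cycle must use some - arrow from the sink v to the source w, and
   returning to v would put w below every source of an arrow into v, so w
   would be the minimum and the arrow would be labelled +.
   Conversely, in a strict labeling the + arrow into a sink v reaches, through
   v, the source of every other arrow into v; so for an acyclic one, any linear
   order extending reachability makes sigma_le equal to the labeling. *)

Lemma connect_ind (T : finType) (e : rel T) (P : T -> Prop) x y :
  P x -> (forall a b, P a -> e a b -> P b) -> connect e x y -> P y.
Proof.
move=> Px step /connectP [p]; elim: p x Px => [|a p IHp] x Px /=; first by move=> _ ->.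
by case/andP=> exa pa ly; apply: (IHp a (step _ _ Px exa) pa ly).
Qed.

Lemma connect_first (T : finType) (e : rel T) x y :
  connect e x y -> x != y -> exists2 w, e x w & connect e w y.
Proof.
case/connectP=> [[|w p]] /=; first by move=> _ -> /[!eqxx].
by case/andP=> exw pw ly _; exists w => //; apply/connectP; exists p.
Qed.

Section MinimumOfTotalPreorder.
Variables (T : Type) (P : pred T) (le : rel T).
Hypotheses (le_refl : {in P, reflexive le}) (le_trans : {in P & &, transitive le})
  (le_total : {in P &, total le}).

Lemma exists_le_min (I : eqType) (f : I -> T) (s : seq I) :
  (forall i, P (f i)) -> s != [::] ->
  exists2 m, m \in s & forall i, i \in s -> le (f m) (f i).
Proof.
move=> Pf; elim: s => [//|a [|b s] IHs] _.
  by exists a => [|i]; rewrite ?mem_head // inE => /eqP ->; apply: le_refl (Pf a).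
have [m ms minm] := IHs isT.
have [lam|lma] := orP (le_total (Pf a) (Pf m)).
  exists a => [|i]; first exact: mem_head.
  rewrite in_cons => /predU1P [-> | i_s]; first exact: le_refl (Pf a).
  by apply: (le_trans (Pf m) (Pf a) (Pf i) lam); apply: minm.
exists m => [|i]; first by rewrite in_cons ms orbT.
by rewrite in_cons => /predU1P [-> | i_s] //; apply: minm.
Qed.

End MinimumOfTotalPreorder.

Section TopologicalOrder.
Variables (T : finType) (e : rel T).
Hypothesis e_acyclic : forall u v, e u v -> ~~ connect e v u.

Lemma connect_antisym u v : connect e u v -> connect e v u -> u = v.
Proof.
move=> huv hvu; apply/eqP; apply: contraT => neq.
have [w euw cwv] := connect_first huv neq.
by move: (e_acyclic euw); rewrite (connect_trans cwv hvu).
Qed.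

Definition topo_rank v := #|[set w | connect e w v]|.

Lemma topo_rank_lt u v : connect e u v -> u != v -> topo_rank u < topo_rank v.
Proof.
move=> huv neq; apply: proper_card; apply/properP; split.
  by apply/subsetP => w; rewrite !inE => hw; apply: connect_trans hw huv.
exists v; rewrite !inE ?connect0 //.
by apply: contra neq => hvu; apply/eqP; apply: connect_antisym.
Qed.

Definition topo_le (u v : T) : bool :=
  (topo_rank u < topo_rank v) ||
  ((topo_rank u == topo_rank v) && (enum_rank u <= enum_rank v)).

Lemma topo_le_refl : reflexive topo_le.
Proof. by move=> u; rewrite /topo_le eqxx leqnn orbT. Qed.

Lemma topo_le_anti : antisymmetric topo_le.
Proof.
move=> u v; rewrite /topo_le.
case: ltngtP => //= _.
by rewrite -eqn_leq => /eqP/val_inj/enum_rank_inj.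
Qed.

Lemma topo_le_trans : transitive topo_le.
Proof.
move=> v u w; rewrite /topo_le => /orP[h1|/andP[/eqP h1 h1']] /orP[h2|/andP[/eqP h2 h2']].
- by rewrite (ltn_trans h1 h2).
- by rewrite -h2 h1.
- by rewrite h1 h2.
- by rewrite h1 h2 eqxx (leq_trans h1' h2') orbT.
Qed.

Lemma topo_le_total : total topo_le.
Proof.
move=> u v; rewrite /topo_le; case: ltngtP => //= _.
by rewrite leq_total.
Qed.

Lemma connect_topo_le u v : connect e u v -> topo_le u v.
Proof.
move=> huv; have [->|neq] := eqVneq u v; first exact: topo_le_refl.
by rewrite /topo_le topo_rank_lt.
Qed.

End TopologicalOrder.

Section Quiver.
Variables (V A : finType) (d c : A -> V).

Lemma target_not_source (x : A) : ~~ is_source c (c x).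
Proof. by rewrite negbK; apply/existsP; exists x. Qed.

Lemma sarrow_inj (x y : sarrow d c) :
  d (val x) = d (val y) -> c (val x) = c (val y) -> x = y.
Proof.
move=> hd hc; apply: val_inj; have /forallP/(_ (val x)) := valP y.
by rewrite hd hc !eqxx => /eqP.
Qed.

Lemma orientP (s : slabeling d c) u v : orient s u v ->
  exists x : sarrow d c, if s x then d (val x) = u /\ c (val x) = v
                         else c (val x) = u /\ d (val x) = v.
Proof.
by case/existsP=> x ex; exists x; move: ex; case: (s x) => /andP [/eqP -> /eqP ->].
Qed.

Lemma orient_plus (s : slabeling d c) x : s x -> orient s (d (val x)) (c (val x)).
Proof. by move=> sx; apply/existsP; exists x; rewrite sx !eqxx. Qed.

Lemma orient_minus (s : slabeling d c) x : ~~ s x -> orient s (c (val x)) (d (val x)).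
Proof. by move=> /negbTE sx; apply/existsP; exists x; rewrite sx !eqxx. Qed.

Lemma sigmaP (le : rel V) x :
  reflect (forall y : sarrow d c, c (val y) = c (val x) -> le (d (val x)) (d (val y)))
          (sigma_of d c le x).
Proof.
rewrite ffunE; apply: (iffP forallP) => [h y /eqP|h y].
  by move/implyP: (h y).
by apply/implyP => /eqP /h.
Qed.

Section SigmaOfGraphicOrdering.
Hypothesis diam1 : diameter1 d c.
Variable le : rel V.
Hypothesis graphic : graphic_ordering c le.

Lemma is_source_d (x : A) : is_source c (d x).
Proof. by apply/existsPn => a; apply/eqP; apply: diam1. Qed.

Let le_refl : {in is_source c, reflexive le}.
Proof. by case: graphic. Qed.
Let le_anti : {in is_source c &, antisymmetric le}.
Proof. by case: graphic. Qed.
Let le_trans : {in is_source c & &, transitive le}.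
Proof. by case: graphic. Qed.
Let le_total : {in is_source c &, total le}.
Proof. by case: graphic. Qed.

Let sigma : slabeling d c := sigma_of d c le.

Lemma sigma_strict : strict_lab sigma.
Proof.
move=> v /existsP [x0 cx0].
pose into_v := [seq y <- enum {: sarrow d c} | c (val y) == v].
have x0_in : x0 \in into_v by rewrite mem_filter cx0 mem_enum.
have : into_v != [::] by apply/eqP => into_v0; rewrite into_v0 in x0_in.
case/(exists_le_min le_refl le_trans le_total (fun y => is_source_d (val y))) => m.
rewrite mem_filter => /andP [/eqP cm _] minm.
have min_le (y : sarrow d c) : c (val y) = v -> le (d (val m)) (d (val y)).
  by move=> cy; apply: minm; rewrite mem_filter cy eqxx mem_enum.
apply/eqP/cards1P; exists m; apply/setP => y; rewrite !inE.
apply/andP/eqP => [[/eqP cy /sigmaP sy] | ->]; last first.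
  by split; [rewrite cm | apply/sigmaP => z; rewrite cm; apply: min_le].
apply: sarrow_inj; last by rewrite cy cm.
apply: le_anti; try exact: is_source_d.
by rewrite min_le // andbT; apply: sy; rewrite cy cm.
Qed.

Lemma sigma_reach_above u r : is_source c u -> connect (orient sigma) u r ->
  (forall y : sarrow d c, c (val y) = r -> le u (d (val y))) /\
  (is_source c r -> le u r).
Proof.
move=> su; apply: (connect_ind (P := fun r =>
  (forall y : sarrow d c, c (val y) = r -> le u (d (val y))) /\
  (is_source c r -> le u r))) => [|a b [above_in above_src]].
  split=> [y cy|_]; last exact: le_refl.
  by move: su; rewrite -cy (negbTE (target_not_source _)).
case/orientP=> x; case: ifP => [/sigmaP minx [dx cx] | _ [cx dx]].
  split=> [y cy|]; last by rewrite -cx (negbTE (target_not_source _)).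
  apply: (le_trans (is_source_d (val x)) su (is_source_d (val y))).
    by rewrite dx; apply: above_src; rewrite -dx is_source_d.
  by apply: minx; rewrite cy cx.
split=> [y cy|_]; first by case: (diam1 (a:=val y) (b:=val x)); rewrite cy dx.
by rewrite -dx; apply: above_in.
Qed.

Lemma sigma_minus_no_return x :
  ~~ sigma x -> ~~ connect (orient sigma) (d (val x)) (c (val x)).
Proof.
apply: contra => /(sigma_reach_above (is_source_d _)) [above_in _].
by apply/sigmaP => y cy; apply: above_in.
Qed.

Lemma sigma_acyclic : acyclic_lab sigma.
Proof.
move=> u v /orientP [x]; case: ifP => sx; last first.
  by case=> <- <-; apply: sigma_minus_no_return; rewrite sx.
case=> <- <-; apply/negP => back.
have ne : c (val x) != d (val x) by apply/eqP; apply: diam1.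
have [w /orientP [y] ] := connect_first back ne.
case: ifP => sy.
  by case=> dy _; case: (diam1 (a:=val x) (b:=val y)); rewrite dy.
case=> cy wy w_to_dx; apply: (negP (sigma_minus_no_return (negbT sy))).
rewrite wy; apply: connect_trans w_to_dx _.
by rewrite cy; apply/connect1/orient_plus.
Qed.

End SigmaOfGraphicOrdering.

Section GraphicOfStrictAcyclic.
Variable s : slabeling d c.
Hypotheses (strict : strict_lab s) (acyclic : acyclic_lab s).

Lemma strict_plus_singleton (x : sarrow d c) :
  exists m, [set y : sarrow d c | (c (val y) == c (val x)) && s y] = [set m].
Proof. by apply/cards1P/eqP/strict/existsP; exists x. Qed.

Lemma strict_plus_exists (x : sarrow d c) :
  exists2 m : sarrow d c, c (val m) = c (val x) & s m.
Proof.
have [m plus_x] := strict_plus_singleton x.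
have := set11 m; rewrite -plus_x inE => /andP [/eqP cm sm].
by exists m; [exact: cm | exact: sm].
Qed.

Lemma strict_plus_unique (x y : sarrow d c) :
  c (val x) = c (val y) -> s x -> s y -> x = y.
Proof.
move=> cxy sx sy; have [m plus_x] := strict_plus_singleton x.
have is_m z : c (val z) = c (val x) -> s z -> z = m.
  by move=> cz sz; apply/set1P; rewrite -plus_x inE cz eqxx sz.
by rewrite (is_m x erefl sx) (is_m y (esym cxy) sy).
Qed.

Lemma plus_reaches_minus x y :
  c (val x) = c (val y) -> s x -> ~~ s y ->
  connect (orient s) (d (val x)) (d (val y)).
Proof.
move=> cxy sx sy; apply: (connect_trans (y := c (val x))).
  exact/connect1/orient_plus.
by rewrite cxy; apply/connect1/orient_minus.
Qed.

Let le := topo_le (orient s).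

Lemma topo_le_graphic : graphic_ordering c le.
Proof.
split=> [u _|u v _ _|v u w _ _ _|u v _ _].
- exact: topo_le_refl.
- exact: topo_le_anti.
- exact: topo_le_trans.
- exact: topo_le_total.
Qed.

Lemma sigma_topo_le : sigma_of d c le = s.
Proof.
apply/ffunP => x; apply/sigmaP/idP => [minx | sx y cy].
  apply: contraT => sx; have [m cm sm] := strict_plus_exists x.
  have mx : m = x.
    apply: sarrow_inj (cm); apply: topo_le_anti; apply/andP; split; last exact: minx cm.
    exact: connect_topo_le acyclic _ _ (plus_reaches_minus cm sm sx).
  by rewrite -mx sm in sx.
have [sy|sy] := boolP (s y).
  by rewrite -(strict_plus_unique (esym cy) sx sy); apply: topo_le_refl.
exact: connect_topo_le acyclic _ _ (plus_reaches_minus (esym cy) sx sy).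
Qed.

End GraphicOfStrictAcyclic.
End Quiver.

Theorem mainTheorem9 (V A : finType) (d c : A -> V) :
  diameter1 d c ->
  forall s : slabeling d c,
    (strict_lab s /\ acyclic_lab s) <->
    (exists le : rel V, graphic_ordering c le /\ @sigma_of V A d c le = s).
Proof.
move=> diam1 s; split => [[strict acyclic] | [le [graphic <-]]].
  exists (topo_le (orient s)).
  by split; [exact: topo_le_graphic | exact: sigma_topo_le].
by split; [exact: sigma_strict | exact: sigma_acyclic].
Qed.
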